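(* Let $m\ge1$. For $j=1,\ldots,m$ let $\rho_j,\bar\gamma_j\ge0$ with $\rho_j+\bar\gamma_j>0$, and let $\phi_{j,0}>0$ be constants. Let $(\eta_i)_{i\ge0}$ be integrable random variables with $\eta_{i+1}\ge\eta_i$ almost surely for all $i$, and $\eta_0\ge\underline\eta$ almost surely for some constant $\underline\eta>0$. Define recursively $$\phi_{j,i+1}:=\phi_{j,i}+2(\bar\gamma_j\eta_i+\rho_j)\qquad(j=1,\ldots,m;\ i\ge0).$$ Then: (a) If each $\eta_i$ is $\mathcal{O}_{i-1}$-measurable for a filtration $(\mathcal{O}_i)_{i\ge-1}$, then $\phi_{j,N}$ is $\mathcal{O}_{N-1}$-measurable and positive for every $N\ge1$. (b) For every $N\ge1$, $$\mathcal{E}[\phi_{j,N}]=\phi_{j,0}+2\rho_jN+2\bar\gamma_j\sum_{i=0}^{N-1}\mathcal{E}[\eta_i].$$ (c) There are constants $c_j>0$ such that $\mathcal{E}[\phi_{j,N}^{-1}]\le c_j/N$ for all $N\ge1$. (d) Suppose in addition that there are $p>0$ and $b>0$ such that $\eta_i\ge b\min_{k=1,\ldots,m}\phi_{k,i}^{\,p}$ almost surely for all $i\ge0$. Then there are constants $\tilde c_j>0$ such that $$\frac{1}{\mathcal{E}[\phi_{j,N}^{-1}]}\ \ge\ \bar\gamma_j\tilde c_jN^{p+1}\qquad(N\ge4).$$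
   Context: $\mathcal{E}$ denotes expectation on an underlying probability space. A filtration $(\mathcal{O}_i)_{i\ge-1}$ is an increasing sequence of $\sigma$-algebras. *)

From HB Require Import structures.
From mathcomp Require Import all_boot all_order all_algebra.
From mathcomp Require Import all_classical all_reals all_analysis.
Set Implicit Arguments. Unset Strict Implicit. Unset Printing Implicit Defensive.
Import Order.TTheory GRing.Theory Num.Theory.
Local Open Scope classical_set_scope.
Local Open Scope ring_scope.

Fixpoint phiseq {T : Type} {R : realType} (phi0 gam rho : R)
    (eta : nat -> T -> R) (i : nat) (x : T) : R :=
  match i with
  | 0%N => phi0
  | i'.+1 => phiseq phi0 gam rho eta i' x + 2 * (gam * eta i' x + rho)
  end.

Definition G_measurable {d} {T : measurableType d} {R : realType}
    (G : set (set T)) (f : T -> R) : Prop :=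
  forall B : set R, measurable B -> G (f @^-1` B).

(* A filtration (O_k)_{k >= -1}, encoded as F : nat -> set (set T) with
   F k = O_{k-1}: each F k is a sigma-algebra on T contained in the ambient
   one, and the family is increasing. *)
Definition is_filtration {d} {T : measurableType d} (F : nat -> set (set T)) : Prop :=
  (forall k, sigma_algebra setT (F k)) /\
  (forall k, F k `<=` measurable) /\
  (forall k, F k `<=` F k.+1).

(* Since eta_i >= eta_0 >= etal a.s., phi_{j,N} is a.s. at
   least 2 (gam_j etal + rho_j) N, a positive multiple of N, and a deterministic lower bound
   B > 0 on phi yields E[phi^-1] <= B^-1: this is (c).  For (d), the same bound shows
   phi_{k,i} >= a (i + 1) for all k, with a common rate a > 0, so eta_i >= b a^p (i + 1)^p
   and phi_{j,N} >= 2 gam_j b a^p sum_{i<N} (i + 1)^p >= gam_j b a^p 2^-p N^(p+1). *)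

From HB Require Import structures.
From mathcomp Require Import all_boot all_order all_algebra.
From mathcomp Require Import all_classical all_reals all_analysis.
From mathcomp Require Import measurable_realfun ring lra.
Set Implicit Arguments.
Unset Strict Implicit.
Unset Printing Implicit Defensive.
Import Order.TTheory GRing.Theory Num.Theory.
Local Open Scope classical_set_scope.
Local Open Scope ring_scope.

Section Recursion.
Context {T : Type} {R : realType} {phi0 gam rho : R} {eta : nat -> T -> R}.
Local Notation phi := (phiseq phi0 gam rho eta).

Lemma phiseqE N x : phi N x = phi0 + 2 * \sum_(i < N) (gam * eta i x + rho).
Proof.
elim: N => [|N IH]; first by rewrite big_ord0 mulr0 addr0.
by rewrite /= IH big_ord_recr /= [in RHS]mulrDr addrA.
Qed.

Hypothesis gam_ge0 : 0 <= gam.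

Lemma phiseq_ge_sum (l : nat -> R) N x :
  (forall i, (i < N)%N -> l i <= eta i x) ->
  phi0 + 2 * \sum_(i < N) (gam * l i + rho) <= phi N x.
Proof.
move=> l_le; rewrite phiseqE lerD2l ler_wpM2l // ler_sum // => i _.
by rewrite lerD2r ler_wpM2l // l_le.
Qed.

Lemma phiseq_ge_linear (l : R) N x :
  (forall i, (i < N)%N -> l <= eta i x) ->
  phi0 + 2 * (gam * l + rho) * N%:R <= phi N x.
Proof.
move=> l_le; apply: le_trans (phiseq_ge_sum (l := fun=> l) l_le).
by rewrite -mulrA mulr_natr sumr_const card_ord.
Qed.

Lemma phiseq_ge_succ (l a : R) N x :
  a <= phi0 -> a <= 2 * (gam * l + rho) ->
  (forall i, (i < N)%N -> l <= eta i x) -> a * N.+1%:R <= phi N x.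
Proof.
move=> a_le_phi0 a_le_drift l_le; apply: le_trans (phiseq_ge_linear l_le).
by rewrite -natr1 mulrDr mulr1 addrC lerD // ler_wpM2r.
Qed.

End Recursion.

(* Pair the term of index i with that of index N - 1 - i: one of i + 1 and N - i is >= N / 2. *)
Lemma sum_succ_powR_ge (R : realType) (p : R) N : 0 <= p ->
  N%:R * (N%:R / 2) `^ p <= 2 * \sum_(i < N) i.+1%:R `^ p.
Proof.
move=> p_ge0; rewrite [leRHS]mulr_natl mulr2n.
rewrite [X in _ <= _ + X](reindex_inj rev_ord_inj) -big_split /=.
have -> : N%:R * (N%:R / 2) `^ p = \sum_(i < N) (N%:R / 2) `^ p.
  by rewrite sumr_const card_ord mulr_natl.
apply: ler_sum => i _.
have N_half_ge0 : 0 <= N%:R / 2 :> R by rewrite divr_ge0.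
have -> : (N - i.+1).+1%:R = N%:R - i%:R :> R by rewrite subnSK // natrB // ltnW.
have ltiN : i%:R < N%:R :> R by rewrite ltr_nat.
have [half_le|lt_half] := lerP (N%:R / 2 : R) i.+1%:R.
  by rewrite -[leLHS]addr0 lerD ?powR_ge0 // ge0_ler_powR ?nnegrE.
rewrite -[leLHS]add0r lerD ?powR_ge0 // ge0_ler_powR ?nnegrE ?subr_ge0 ?(ltW ltiN) //.
by rewrite -natr1 in lt_half; lra.
Qed.

Lemma phiseq_ge_powR (T : Type) (R : realType) (phi0 gam rho : R) (eta : nat -> T -> R)
    (a b p : R) N x :
  0 <= phi0 -> 0 <= gam -> 0 <= rho -> 0 <= a -> 0 <= b -> 0 <= p ->
  (forall i, (i < N)%N -> b * (a * i.+1%:R) `^ p <= eta i x) ->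
  gam * (b * a `^ p * 2^-1 `^ p) * N%:R `^ (p + 1) <= phiseq phi0 gam rho eta N x.
Proof.
move=> phi0_ge0 gam_ge0 rho_ge0 a_ge0 b_ge0 p_ge0 eta_ge.
set c := gam * b * a `^ p.
have c_ge0 : 0 <= c by rewrite !mulr_ge0 ?powR_ge0.
have -> : gam * (b * a `^ p * 2^-1 `^ p) * N%:R `^ (p + 1) =
          c * (N%:R * (N%:R / 2) `^ p).
  rewrite powRD ?(gt_eqF (ltr_wpDl p_ge0 ltr01)) // powRr1 // powRM ?invr_ge0 //.
  by rewrite /c; ring.
apply: le_trans (ler_wpM2l c_ge0 (sum_succ_powR_ge N p_ge0)) _.
apply: le_trans (phiseq_ge_sum gam_ge0 eta_ge).
rewrite -[leLHS]add0r lerD // mulrCA ler_wpM2l // mulr_sumr ler_sum // => i _.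
by rewrite powRM // /c !mulrA lerDl.
Qed.

Section CommonRate.
Context {T : Type} {R : realType} {n : nat} (phi0 gam rho : 'I_n.+1 -> R) (l : R).

Definition common_rate : R :=
  \big[Order.min/1]_(k < n.+1) Order.min (phi0 k) (2 * (gam k * l + rho k)).

Lemma common_rate_gt0 :
  (forall k, 0 < phi0 k) -> (forall k, 0 < gam k * l + rho k) -> 0 < common_rate.
Proof.
move=> phi0_gt0 drift_pos.
by apply: lt_bigmin => // k _; rewrite lt_min phi0_gt0 mulr_gt0.
Qed.

Lemma phiseq_ge_common_rate (eta : nat -> T -> R) k i x :
  0 <= gam k -> (forall i, l <= eta i x) ->
  common_rate * i.+1%:R <= phiseq (phi0 k) (gam k) (rho k) eta i x.
Proof.
move=> gam_ge0 l_le.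
have := bigmin_le 1 k (fun k => Order.min (phi0 k) (2 * (gam k * l + rho k))).
rewrite le_min => /andP[rate_le_phi0 rate_le_drift].
exact: (phiseq_ge_succ gam_ge0 rate_le_phi0 rate_le_drift (fun i _ => l_le i)).
Qed.

End CommonRate.

Lemma powR_le_bigmin (R : realType) n (f : 'I_n.+1 -> R) (y p : R) :
  0 <= p -> 0 <= y -> (forall k, y <= f k) ->
  y `^ p <= \big[Order.min/f ord0 `^ p]_(k < n.+1) f k `^ p.
Proof.
move=> p_ge0 y_ge0 y_le; have f_ge0 k : 0 <= f k := le_trans y_ge0 (y_le k).
by apply: le_bigmin => [|k _]; apply: ge0_ler_powR; rewrite ?nnegrE.
Qed.

Lemma phiseq_measurable d (T : measurableType d) (R : realType) (phi0 gam rho : R)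
    (eta : nat -> T -> R) N :
  (forall i, (i < N)%N -> measurable_fun setT (eta i)) ->
  measurable_fun setT (phiseq phi0 gam rho eta N).
Proof.
elim: N => [|N IH] eta_meas /=; first exact: measurable_cst.
apply: measurable_funD; first by apply: IH => i /ltnW; exact: eta_meas.
apply: measurable_funM; first exact: measurable_cst.
apply: measurable_funD; last exact: measurable_cst.
by apply: measurable_funM; [exact: measurable_cst | exact: eta_meas].
Qed.

Lemma G_measurableP d (T : measurableType d) (R : realType) (G : set (set T))
    (f : T -> R) :
  sigma_algebra setT G ->
  G_measurable G f <-> measurable_fun (setT : set (g_sigma_algebraType G)) f.
Proof.
move=> G_sigma; split=> [Gf _ B mB | mf B mB].
  by rewrite setTI; apply: sub_sigma_algebra; exact: Gf.
by have := mf measurableT B mB; rewrite setTI /measurable /= (sigma_algebra_id G_sigma).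
Qed.

Lemma filtration_le d (T : measurableType d) (F : nat -> set (set T)) i k :
  is_filtration F -> (i <= k)%N -> F i `<=` F k.
Proof.
move=> [_ [_ F_incr]]; elim: k => [|k IH]; first by rewrite leqn0 => /eqP ->.
rewrite leq_eqVlt => /predU1P[-> //|]; rewrite ltnS => /IH Fik.
exact: subset_trans Fik (F_incr k).
Qed.

Lemma G_measurable_phiseq d (T : measurableType d) (R : realType)
    (F : nat -> set (set T)) (phi0 gam rho : R) (eta : nat -> T -> R) N :
  is_filtration F -> (forall i, G_measurable (F i) (eta i)) ->
  G_measurable (F N) (phiseq phi0 gam rho eta N).
Proof.
move=> F_filt eta_adapted; have [F_sigma _] := F_filt.
apply/G_measurableP => //; apply: phiseq_measurable => i ltiN.
apply/G_measurableP => // B mB.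
exact: filtration_le F_filt (ltnW ltiN) _ (eta_adapted i B mB).
Qed.

Lemma measurable_inv (R : realType) : measurable_fun [set: R] GRing.inv.
Proof.
(* inv is continuous off 0 and (junk value 0^-1 = 0) constant on [set 0]. *)
have -> : [set: R] = [set 0] `|` [set x | x != 0].
  by apply/seteqP; split => x // _; case: (eqVneq x 0) => [->|x0]; [left|right].
apply/measurable_funU => //; first by apply: open_measurable; exact: open_neq.
split; first exact: measurable_fun_set1.
apply: open_continuous_measurable_fun; first exact: open_neq.
by move=> x; rewrite inE => /inv_continuous.
Qed.

Section Expectation.
Context d (T : measurableType d) (R : realType) (P : probability T R).
Variables (phi0 gam rho : R) (eta : nat -> T -> R).
Hypothesis eta_integrable : forall i, P.-integrable setT (EFin \o eta i).
Local Notation phi := (phiseq phi0 gam rho eta).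

Let eta_Lfun i : eta i \in Lfun P 1.
Proof. exact/Lfun1_integrable. Qed.

Let phiseqS N : phi N.+1 = phi N \+ ((2 * gam) \o* eta N \+ cst (2 * rho)).
Proof. by apply/funext => x /=; ring. Qed.

Lemma phiseq_Lfun N : phi N \in Lfun P 1.
Proof.
elim: N => [|N IH]; first exact: Lfun_cst.
by rewrite phiseqS !rpredD ?Lfun_cst ?Lfun_scale.
Qed.

Lemma expectation_phiseq N :
  ('E_P[phi N] = (phi0 + 2 * rho * N%:R)%:E + (2 * gam)%:E * \sum_(i < N) 'E_P[eta i])%E.
Proof.
have Efin i : ('E_P[eta i] = (fine 'E_P[eta i])%:E)%E by rewrite fineK ?expectation_fin_num.
under eq_bigr do rewrite Efin.
rewrite sumEFin -EFinM -EFinD.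
elim: N => [|N IH]; first by rewrite big_ord0 !mulr0 !addr0 expectation_cst.
rewrite phiseqS !expectationD ?rpredD ?Lfun_cst ?Lfun_scale ?phiseq_Lfun //.
rewrite expectationZl // expectation_cst IH Efin big_ord_recr /= -EFinM -!EFinD.
by congr (_%:E); rewrite -natr1; ring.
Qed.

End Expectation.

Section ExpectationInv.
Context d (T : measurableType d) (R : realType) (P : probability T R).
Variables (h : T -> R) (B : R).
Hypotheses (h_meas : measurable_fun setT h) (B_gt0 : 0 < B).
Hypothesis h_ge : {ae P, forall x, B <= h x}.

Let inv_h_meas : measurable_fun setT (fun x => ((h x)^-1)%:E : \bar R).
Proof. exact/measurable_EFinP/(measurableT_comp (@measurable_inv R)). Qed.

Let expectation_inv_abs :
  ('E_P[fun x => ((h x)^-1)%R] = \int[P]_x `|((h x)^-1)%R%:E|)%E.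
Proof.
rewrite unlock; apply: ae_eq_integral => //.
- exact: measurableT_comp inv_h_meas.
apply: filterS h_ge => x B_le_hx _ /=.
by rewrite ger0_norm // invr_ge0 (le_trans (ltW B_gt0)).
Qed.

Lemma expectation_inv_le : ('E_P[fun x => ((h x)^-1)%R] <= (B^-1)%:E)%E.
Proof.
have -> : ((B^-1)%:E = \int[P]_x (cst (B^-1)%:E) x)%E.
  by rewrite integral_cst //= probability_setT mule1.
rewrite expectation_inv_abs.
apply: ae_ge0_le_integral => //.
- exact: measurableT_comp inv_h_meas.
- by move=> x _; rewrite lee_fin invr_ge0 ltW.
apply: filterS h_ge => x B_le_hx _.
have hx_gt0 : 0 < h x by apply: lt_le_trans B_le_hx.
by rewrite /= lee_fin ger0_norm ?invr_ge0 ?(ltW hx_gt0) // lef_pV2 ?posrE.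
Qed.

Lemma expectation_inv_gt0 : (0 < 'E_P[fun x => ((h x)^-1)%R])%E.
Proof.
rewrite expectation_inv_abs lt_neqAle integral_ge0 // andbT eq_sym.
apply/negP => /eqP/(ae_eq_integral_abs P measurableT inv_h_meas) inv_h_ae0.
have ae_False : {ae P, forall x : T, False}.
  apply: filterS2 h_ge inv_h_ae0 => x B_le_hx /(_ I) /= /eqP.
  by rewrite eqe invr_eq0 gt_eqF // (lt_le_trans B_gt0).
have /(negligibleP _ measurableT) PT0 : P.-negligible [set: T].
  by apply: negligibleS ae_False => x _ [].
by have := probability_setT P; rewrite PT0 => /eqP; rewrite eq_sym onee_eq0.
Qed.

Lemma le_inv_fine_expectation_inv :
  B <= (fine 'E_P[fun x => ((h x)^-1)%R])^-1.
Proof.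
have E_gt0 := expectation_inv_gt0; have E_le := expectation_inv_le.
have E_fin : ('E_P[fun x => ((h x)^-1)%R] \is a fin_num)%E.
  by rewrite ge0_fin_numE ?(ltW E_gt0) // (le_lt_trans E_le) ?ltry.
rewrite -(fineK E_fin) lee_fin in E_le; rewrite -(fineK E_fin) lte_fin in E_gt0.
by rewrite -[leLHS]invrK lef_pV2 ?posrE ?invr_gt0.
Qed.

End ExpectationInv.

Lemma ae_ge_nondecreasing d (T : measurableType d) (R : realType)
    (mu : {measure set T -> \bar R}) (u : nat -> T -> R) (l : R) :
  (forall i, {ae mu, forall x, u i x <= u i.+1 x}) -> {ae mu, forall x, l <= u 0%N x} ->
  {ae mu, forall x i, l <= u i x}.
Proof.
move=> u_incr u0_ge; apply: filterS2 (ae_foralln u_incr) u0_ge => x u_incr_x u0_ge_x.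
by elim=> [//|i IH]; exact: le_trans IH (u_incr_x i).
Qed.

Lemma drift_gt0 (R : realType) (gam rho etal : R) :
  0 <= gam -> 0 <= rho -> 0 < rho + gam -> 0 < etal -> 0 < gam * etal + rho.
Proof.
move=> gam_ge0 rho_ge0 rho_gam_gt0 etal_gt0; have [gam_gt0|gam_le0] := ltP 0 gam.
  exact: ltr_wpDr rho_ge0 (mulr_gt0 gam_gt0 etal_gt0).
have gam0 : gam = 0 by apply/le_anti/andP.
by move: rho_gam_gt0; rewrite gam0 mul0r add0r addr0.
Qed.

Section PositiveDrift.
Context d (T : measurableType d) (R : realType) (P : probability T R).
Variables (phi0 gam rho etal : R) (eta : nat -> T -> R).
Hypotheses (phi0_gt0 : 0 < phi0) (gam_ge0 : 0 <= gam) (rho_ge0 : 0 <= rho).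
Hypothesis drift_pos : 0 < gam * etal + rho.
Hypothesis eta_meas : forall i, measurable_fun setT (eta i).
Hypothesis eta_ge_etal : {ae P, forall x i, etal <= eta i x}.
Local Notation phi := (phiseq phi0 gam rho eta).

Let phi_meas N : measurable_fun setT (phi N).
Proof. by apply: phiseq_measurable => i _. Qed.

Lemma phiseq_ge_drift_ae N :
  {ae P, forall x, phi0 + 2 * (gam * etal + rho) * N%:R <= phi N x}.
Proof. by apply: filterS eta_ge_etal => x etal_le; exact: phiseq_ge_linear. Qed.

Lemma phiseq_gt0_ae N : {ae P, forall x, 0 < phi N x}.
Proof.
apply: filterS (phiseq_ge_drift_ae N) => x; apply: lt_le_trans.
by rewrite ltr_pwDl // !mulr_ge0 // ltW // drift_pos.
Qed.

Lemma expectation_inv_phiseq_le N : (0 < N)%N ->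
  ('E_P[fun x => ((phi N x)^-1)%R] <= ((2 * (gam * etal + rho))^-1 / N%:R)%:E)%E.
Proof.
move=> N_gt0; rewrite -invfM; apply: expectation_inv_le (phi_meas N) _ _.
  by rewrite !mulr_gt0 ?drift_pos ?ltr0n.
apply: filterS (phiseq_ge_drift_ae N) => x; apply: le_trans.
by rewrite lerDr ltW.
Qed.

Lemma inv_expectation_inv_phiseq_ge (a b p : R) N :
  0 < a -> 0 < b -> 0 <= p -> (0 < N)%N ->
  {ae P, forall x i, b * (a * i.+1%:R) `^ p <= eta i x} ->
  gam * (b * a `^ p * 2^-1 `^ p) * N%:R `^ (p + 1) <=
    (fine 'E_P[fun x => ((phi N x)^-1)%R])^-1.
Proof.
move=> a_gt0 b_gt0 p_ge0 N_gt0 eta_ge.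
set B := gam * _ * _; set D := 2 * (gam * etal + rho) * N%:R.
have D_gt0 : 0 < D by rewrite !mulr_gt0 ?drift_pos ?ltr0n.
(* B vanishes when gam = 0; the drift bound D keeps the lower bound positive. *)
have BD_gt0 : 0 < Num.max B D by rewrite lt_max D_gt0 orbT.
have phi_ge : {ae P, forall x, Num.max B D <= phi N x}.
  apply: filterS2 (phiseq_ge_drift_ae N) eta_ge => x drift_le eta_ge_x.
  rewrite ge_max; apply/andP; split; last first.
    by apply: le_trans drift_le; rewrite lerDr ltW.
  apply: phiseq_ge_powR (ltW phi0_gt0) gam_ge0 rho_ge0 (ltW a_gt0) (ltW b_gt0) p_ge0 _.
  by move=> i _; exact: eta_ge_x.
apply: le_trans (le_inv_fine_expectation_inv (phi_meas N) BD_gt0 phi_ge).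
by rewrite le_max lexx.
Qed.

End PositiveDrift.

Theorem mainTheorem4 (R : realType) (d : measure_display) (T : measurableType d)
  (P : probability T R) (n : nat) (rho gam phi0 : 'I_n.+1 -> R)
  (eta : nat -> T -> R) (etal : R) :
  (forall j, 0 <= rho j) -> (forall j, 0 <= gam j) -> (forall j, 0 < rho j + gam j) ->
  (forall j, 0 < phi0 j) ->
  (forall i, P.-integrable setT (EFin \o eta i)) ->
  (forall i, {ae P, forall x, eta i x <= eta i.+1 x}) ->
  0 < etal -> {ae P, forall x, etal <= eta 0%N x} ->
  let phi j := phiseq (phi0 j) (gam j) (rho j) eta in
  (* (a) *)
  (forall F : nat -> set (set T), is_filtration F ->
     (forall i, G_measurable (F i) (eta i)) ->
     forall j N, (1 <= N)%N ->
       G_measurable (F N) (phi j N) /\ {ae P, forall x, 0 < phi j N x}) /\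
  (* (b) *)
  (forall j N, (1 <= N)%N ->
     ('E_P[phi j N] = (phi0 j + 2 * rho j * N%:R)%:E
                      + (2 * gam j)%:E * \sum_(i < N) 'E_P[eta i])%E) /\
  (* (c) *)
  (exists c : 'I_n.+1 -> R, (forall j, 0 < c j) /\
     forall j N, (1 <= N)%N ->
       ('E_P[fun x => ((phi j N x)^-1)%R] <= (c j / N%:R)%:E)%E) /\
  (* (d) *)
  (forall p b : R, 0 < p -> 0 < b ->
     (forall i, {ae P, forall x,
        b * \big[Order.min/(phi ord0 i x) `^ p]_(k < n.+1) (phi k i x) `^ p
          <= eta i x}) ->
     exists ct : 'I_n.+1 -> R, (forall j, 0 < ct j) /\
       forall j N, (4 <= N)%N ->
         gam j * ct j * N%:R `^ (p + 1) <= (fine 'E_P[fun x => ((phi j N x)^-1)%R])^-1).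
Proof.
move=> rho_ge0 gam_ge0 rho_gam_gt0 phi0_gt0 eta_int eta_incr etal_gt0 eta0_ge phi.
have eta_meas i : measurable_fun setT (eta i).
  exact/measurable_EFinP/(measurable_int P (eta_int i)).
have eta_ge_etal : {ae P, forall x i, etal <= eta i x}.
  exact: ae_ge_nondecreasing eta_incr eta0_ge.
have drift_pos j : 0 < gam j * etal + rho j by apply: drift_gt0.
split; [|split; [|split]].
- move=> F F_filt eta_adapted j N _; split; first exact: G_measurable_phiseq.
  exact: phiseq_gt0_ae (phi0_gt0 j) (gam_ge0 j) (drift_pos j) eta_ge_etal N.
- by move=> j N _; exact: expectation_phiseq.
- exists (fun j => (2 * (gam j * etal + rho j))^-1); split=> [j|j N].
    by rewrite invr_gt0 mulr_gt0.
  exact: (expectation_inv_phiseq_le (phi0_gt0 j) (gam_ge0 j) (drift_pos j)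
    eta_meas eta_ge_etal).
move=> p b p_gt0 b_gt0 eta_ge_min.
set a := common_rate phi0 gam rho etal.
have a_gt0 : 0 < a by exact: common_rate_gt0.
have eta_ge : {ae P, forall x i, b * (a * i.+1%:R) `^ p <= eta i x}.
  apply: filterS2 eta_ge_etal (ae_foralln eta_ge_min) => x etal_le min_le i.
  apply: le_trans (min_le i); rewrite ler_wpM2l ?(ltW b_gt0) //.
  apply: powR_le_bigmin (ltW p_gt0) _ _ => [|k]; first by rewrite mulr_ge0 // ltW.
  exact: (phiseq_ge_common_rate _ _ _ (gam_ge0 k) etal_le).
exists (fun=> b * a `^ p * 2^-1 `^ p); split=> [j|j N N_ge4].
  by rewrite !mulr_gt0 ?powR_gt0 ?invr_gt0.
have N_gt0 : (0 < N)%N by apply: leq_trans N_ge4.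
exact: (inv_expectation_inv_phiseq_ge (phi0_gt0 j) (gam_ge0 j) (rho_ge0 j) (drift_pos j)
  eta_meas eta_ge_etal a_gt0 b_gt0 (ltW p_gt0) N_gt0 eta_ge).
Qed.
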